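(* Let $q\ge2$, $k\ge1$, and let $\mathcal{A}$ be an automaton over $\mathrm{BS}(1,q)$. If $\rho$ is a run in $\mathsf{LeftRuns}_k(\mathcal{A})$, then $|\rho|/k<\mathsf{pmax}(\rho)+1$.
   Context: $\mathrm{BS}(1,q)$ is identified with $\mathbb{Z}[\tfrac1q]\rtimes\mathbb{Z}$ (pairs $(r,m)$ with $(r,m)(r',m')=(r+q^mr',m+m')$), with generating set $\Sigma=\{(1,0),(-1,0),(0,1),(0,-1)\}$. An automaton over $\mathrm{BS}(1,q)$ is $(Q,\Sigma,E,q_0,q_f)$ with $E\subseteq Q\times\Sigma\times Q$. A run $\rho=\rho_1\cdots\rho_\ell$ is a sequence of consecutive edges; $|\rho|=\ell$; its production $[\rho]$ is the product of its labels; it is accepting if it starts in $q_0$ and ends in $q_f$. If $[\rho]=(r,m)$, set $\mathrm{pos}(\rho)=m$; $\mathsf{pmax}(\rho)$ and $\mathsf{pmin}(\rho)$ are the maximum and minimum of $\mathrm{pos}(\pi)$ over prefixes $\pi$ of $\rho$. The run is returning-left if $\mathrm{pos}(\rho)=0$ and $\mathsf{pmin}(\rho)=0$. Its thickness is $\max_{z\in\mathbb{Z}}|\{i:\mathrm{pos}(\rho_1\cdots\rho_i)=z\}|$, and it is $k$-thin if its thickness is at most $k$. $\mathsf{LeftRuns}_k(\mathcal{A})$ is the set of accepting, $k$-thin, returning-left runs of $\mathcal{A}$. *)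

From mathcomp Require Import all_boot all_order all_algebra.
Set Implicit Arguments. Unset Strict Implicit. Unset Printing Implicit Defensive.
Import Order.TTheory GRing.Theory Num.Theory.
Local Open Scope ring_scope.

(* BS(1,q) = Z[1/q] ⋊ Z, represented as pairs (r, m) with r : rat, m : int.
   (Z[1/q] is a subring of Q; every product of generators lands in Z[1/q].) *)
Definition BS := (rat * int)%type.

Definition bs_mul (q : nat) (x y : BS) : BS :=
  (x.1 + (q%:Q) ^ x.2 * y.1, x.2 + y.2).

Definition bs_one : BS := (0, 0).

Inductive letter := gen_a | gen_a_inv | gen_t | gen_t_inv.

Definition letter_val (s : letter) : BS :=
  match s with
  | gen_a => (1, 0)
  | gen_a_inv => (-1, 0)
  | gen_t => (0, 1)
  | gen_t_inv => (0, -1)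
  end.

Record automaton (Q : finType) := Automaton {
  edge : Q -> letter -> Q -> bool;
  q_init : Q;
  q_final : Q }.

Definition edge_t (Q : Type) := (Q * letter * Q)%type.

Definition src (Q : Type) (e : edge_t Q) : Q := e.1.1.
Definition lbl (Q : Type) (e : edge_t Q) : letter := e.1.2.
Definition tgt (Q : Type) (e : edge_t Q) : Q := e.2.

Fixpoint consecutive (Q : eqType) (rho : seq (edge_t Q)) : bool :=
  match rho with
  | e1 :: ((e2 :: _) as rest) => (tgt e1 == src e2) && consecutive rest
  | _ => true
  end.

Definition is_run (Q : finType) (A : automaton Q) (rho : seq (edge_t Q)) : Prop :=
  all (fun e => edge A (src e) (lbl e) (tgt e)) rho /\ consecutive rho.

(* Accepting: starts in q0 and ends in qf (the empty run, located at a single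
   state, is accepting iff q0 = qf). *)
Definition accepting (Q : finType) (A : automaton Q) (rho : seq (edge_t Q)) : Prop :=
  is_run A rho /\
  match rho with
  | [::] => q_init A = q_final A
  | e :: _ => src e = q_init A /\ tgt (last e rho) = q_final A
  end.

Definition production (q : nat) (Q : Type) (rho : seq (edge_t Q)) : BS :=
  foldl (bs_mul q) bs_one [seq letter_val (lbl e) | e <- rho].

Definition pos (q : nat) (Q : Type) (rho : seq (edge_t Q)) : int :=
  (production q rho).2.

Definition prefix_pos (q : nat) (Q : Type) (rho : seq (edge_t Q)) : seq int :=
  [seq pos q (take i rho) | i <- iota 0 (size rho).+1].

Definition pmax (q : nat) (Q : Type) (rho : seq (edge_t Q)) : int :=
  foldr Num.max (pos q (take 0 rho)) (prefix_pos q rho).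

Definition pmin (q : nat) (Q : Type) (rho : seq (edge_t Q)) : int :=
  foldr Num.min (pos q (take 0 rho)) (prefix_pos q rho).

Definition returning_left (q : nat) (Q : Type) (rho : seq (edge_t Q)) : Prop :=
  pos q rho = 0 /\ pmin q rho = 0.

Definition visits (q : nat) (Q : Type) (rho : seq (edge_t Q)) (z : int) : nat :=
  count (fun i => pos q (take i rho) == z) (iota 0 (size rho).+1).

Definition k_thin (q : nat) (k : nat) (Q : Type) (rho : seq (edge_t Q)) : Prop :=
  forall z : int, (visits q rho z <= k)%N.

Definition LeftRuns (q k : nat) (Q : finType) (A : automaton Q)
  (rho : seq (edge_t Q)) : Prop :=
  accepting A rho /\ k_thin q k rho /\ returning_left q rho.

(* Every prefix of a returning-left run sits at a position in [0, pmax], and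
   k-thinness lets each of these pmax + 1 positions be occupied by at most k
   of the |rho| + 1 prefixes.  Hence |rho| + 1 <= k (pmax + 1), by pigeonhole. *)

From mathcomp Require Import all_boot all_order all_algebra.
Set Implicit Arguments. Unset Strict Implicit. Unset Printing Implicit Defensive.
Import Order.TTheory GRing.Theory Num.Theory.
Local Open Scope ring_scope.

Lemma size_le_mul_count (T : eqType) (s r : seq T) (k : nat) :
  uniq r -> {subset s <= r} -> (forall z, count_mem z s <= k)%N ->
  (size s <= k * size r)%N.
Proof.
move=> r_uniq s_r s_k.
have -> : size s = (\sum_(z <- r) count_mem z s)%N.
  elim: s s_r {s_k} => [_|x s IH s_r]; first by rewrite big1_seq.
  have x_r : x \in r by apply: s_r; rewrite mem_head.
  rewrite /= big_split /= -IH => [|y ys]; last by apply: s_r; rewrite inE ys orbT.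
  rewrite -big_mkcond sum1_count (eq_count (a2 := pred1 x)) => [|y]; last exact: eq_sym.
  by rewrite count_uniq_mem // x_r.
apply: (@leq_trans (\sum_(z <- r) k)); first exact: leq_sum.
by rewrite big_const_seq count_predT iter_addn_0.
Qed.

Lemma mem_iota_int (n : nat) (x : int) :
  0 <= x <= n%:Z -> x \in [seq i%:Z | i <- iota 0 n.+1].
Proof. by case: x => // m; rewrite lez_nat => le_mn; rewrite map_f // mem_iota. Qed.

Lemma foldr_max_ge (R : realDomainType) (a : R) (s : seq R) (y : R) :
  y \in s -> y <= foldr Num.max a s.
Proof.
elim: s => //= x s IH; rewrite inE le_max => /orP[/eqP ->|/IH ->].
  by rewrite lexx.
by rewrite orbT.
Qed.

Lemma foldr_min_le (R : realDomainType) (a : R) (s : seq R) (y : R) :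
  y \in s -> foldr Num.min a s <= y.
Proof.
elim: s => //= x s IH; rewrite inE ge_min => /orP[/eqP ->|/IH ->].
  by rewrite lexx.
by rewrite orbT.
Qed.

Section PrefixPositions.

Variables (q : nat) (Q : Type) (rho : seq (edge_t Q)).

Lemma size_prefix_pos : size (prefix_pos q rho) = (size rho).+1.
Proof. by rewrite size_map size_iota. Qed.

Lemma visits_count_mem (z : int) : visits q rho z = count_mem z (prefix_pos q rho).
Proof. by rewrite /visits count_map. Qed.

Lemma prefix_pos_le_pmax (x : int) : x \in prefix_pos q rho -> x <= pmax q rho.
Proof. exact: foldr_max_ge. Qed.

Lemma pmin_le_prefix_pos (x : int) : x \in prefix_pos q rho -> pmin q rho <= x.
Proof. exact: foldr_min_le. Qed.

Lemma pmax_ge0 : 0 <= pmax q rho.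
Proof.
apply: prefix_pos_le_pmax; apply/mapP; exists 0%N; last by rewrite take0.
by rewrite mem_iota.
Qed.

Lemma thin_left_size_bound (k : nat) :
  k_thin q k rho -> pmin q rho = 0 -> ((size rho).+1 <= k * `|pmax q rho|.+1)%N.
Proof.
move=> thin pmin0.
set range := [seq i%:Z | i <- iota 0 `|pmax q rho|.+1].
have size_range : size range = `|pmax q rho|.+1 by rewrite size_map size_iota.
rewrite -size_prefix_pos -size_range; apply: size_le_mul_count.
- by rewrite map_inj_uniq ?iota_uniq // => m n [].
- move=> x x_rho; apply: mem_iota_int.
  by rewrite -pmin0 pmin_le_prefix_pos // gez0_abs ?pmax_ge0 ?prefix_pos_le_pmax.
- by move=> z; rewrite -visits_count_mem.
Qed.

End PrefixPositions.

Theorem mainTheorem12 (q k : nat) (Q : finType) (A : automaton Q)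
  (rho : seq (edge_t Q)) :
  (2 <= q)%N -> (1 <= k)%N -> LeftRuns q k A rho ->
  (size rho)%:R / k%:R < (pmax q rho + 1)%:~R :> rat.
Proof.
move=> _ k_gt0 [_ [thin [_ pmin0]]].
rewrite -(gez0_abs (pmax_ge0 q rho)) ltr_pdivrMr ?ltr0n //.
rewrite intrD -!pmulrn natr1 -natrM ltr_nat mulnC.
exact: thin_left_size_bound thin pmin0.
Qed.
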